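(* Let $(S,\gamma)$ be a $C^\infty$ surface with boundary in $\mathbf{R}^3$, and suppose the boundary $\gamma$ is of finite type $(1,1+s,1+s+r)$ at $t=t_0$ (for positive integers $r,s$). Then $\gamma(t_0)$ is an osculating-tangent point if and only if $\kappa_2^{(s-1)}(t_0)=0$.
   Context: $S\subset\mathbf{R}^3$ is a co-oriented immersed $C^\infty$ surface with boundary curve $\gamma$, parametrised by arc length $t$; $f^{(j)}$ denotes the $j$-th derivative in $t$. Adapted frame: $\boldsymbol e_1=\gamma'$, $\boldsymbol e_3=\boldsymbol n$ the unit normal of $S$, $\boldsymbol e_2=\boldsymbol e_3\times\boldsymbol e_1$; $\kappa_1,\kappa_2,\kappa_3$ are defined by $\boldsymbol e_1'=\kappa_1\boldsymbol e_2+\kappa_2\boldsymbol e_3$, $\boldsymbol e_2'=-\kappa_1\boldsymbol e_1+\kappa_3\boldsymbol e_3$, $\boldsymbol e_3'=-\kappa_2\boldsymbol e_1-\kappa_3\boldsymbol e_2$. The curve $\gamma$ is of finite type at $t_0$ if $A_m(t_0)=(\gamma'(t_0),\dots,\gamma^{(m)}(t_0))$ has rank $3$ for some $m$; its type is $(a_1,a_2,a_3)$ with $a_i=\min\{m:\mathrm{rank}A_m(t_0)=i\}$. The osculating plane at $t_0$ is the plane through $\gamma(t_0)$ spanned by $\gamma^{(a_1)}(t_0)$ and $\gamma^{(a_2)}(t_0)$. $\gamma(t_0)$ is an osculating-tangent point if this osculating plane equals $T_{\gamma(t_0)}S$. *)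

From HB Require Import structures.
From mathcomp Require Import all_boot all_order all_algebra.
From mathcomp Require Import all_classical all_reals all_analysis.
Set Implicit Arguments. Unset Strict Implicit. Unset Printing Implicit Defensive.
Import Order.TTheory GRing.Theory Num.Theory.
Import numFieldNormedType.Exports.
Local Open Scope ring_scope.
Local Open Scope classical_set_scope.

Section Defs.
Variable R : realType.

Definition vec3 := 'rV[R]_3.

Definition dot (u v : vec3) : R := (u *m v^T) 0 0.

Definition dern (V : normedModType R) (j : nat) (f : R -> V) : R -> V :=
  derive1n j f.

Definition smooth (V : normedModType R) (f : R -> V) : Prop :=
  forall (j : nat) (t : R), derivable (dern j f) t 1.

(* A_m(t0) = (gamma'(t0), ..., gamma^(m)(t0)); stored with these vectors as rows *)
Definition Amat (g : R -> vec3) (t0 : R) (m : nat) : 'M[R]_(m, 3) :=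
  \matrix_(i < m, j < 3) dern i.+1 g t0 0 j.

Definition finite_type_at (g : R -> vec3) (t0 : R) : Prop :=
  exists m, \rank (Amat g t0 m) = 3%N.

Definition is_min_rank_index (g : R -> vec3) (t0 : R) (i a : nat) : Prop :=
  \rank (Amat g t0 a) = i /\ forall m, \rank (Amat g t0 m) = i -> (a <= m)%N.

Definition has_type_at (g : R -> vec3) (t0 : R) (a1 a2 a3 : nat) : Prop :=
  finite_type_at g t0 /\
  is_min_rank_index g t0 1 a1 /\ is_min_rank_index g t0 2 a2 /\
  is_min_rank_index g t0 3 a3.

(* Data of a co-oriented smooth surface S along its boundary curve gamma:
   gamma parametrised by arc length, and the unit normal n of S along gamma
   (n(t) is orthogonal to gamma'(t), so T_{gamma(t)}S = n(t)^perp). *)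
Definition surface_boundary_data (g n : R -> vec3) : Prop :=
  smooth g /\ smooth n /\
  (forall t, dot (dern 1 g t) (dern 1 g t) = 1) /\
  (forall t, dot (n t) (n t) = 1) /\
  (forall t, dot (n t) (dern 1 g t) = 0).

Definition cross (u v : vec3) : vec3 :=
  \row_(k < 3)
    (if k == 0 :> nat then u 0 1 * v 0 2 - u 0 2 * v 0 1
     else if k == 1 :> nat then u 0 2 * v 0 0 - u 0 0 * v 0 2
     else u 0 0 * v 0 1 - u 0 1 * v 0 0).

Definition e1 (g : R -> vec3) : R -> vec3 := dern 1 g.
Definition e3 (n : R -> vec3) : R -> vec3 := n.
Definition e2 (g n : R -> vec3) : R -> vec3 := fun t => cross (e3 n t) (e1 g t).

(* e1' = kappa1 e2 + kappa2 e3 with (e1,e2,e3) orthonormal, so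
   kappa2 = <e1', e3> *)
Definition kappa2 (g n : R -> vec3) : R -> R :=
  fun t => dot (dern 1 (e1 g) t) (e3 n t).

Definition osculating_plane (g : R -> vec3) (t0 : R) (a1 a2 : nat) : set vec3 :=
  [set p | exists a b : R,
     p = g t0 + a *: dern a1 g t0 + b *: dern a2 g t0].

Definition tangent_plane (g n : R -> vec3) (t0 : R) : set vec3 :=
  [set p | dot (p - g t0) (n t0) = 0].

Definition osculating_tangent_point (g n : R -> vec3) (t0 : R) (a1 a2 : nat) : Prop :=
  osculating_plane g t0 a1 a2 = tangent_plane g n t0.

End Defs.

From HB Require Import structures.
From mathcomp Require Import all_boot all_order all_algebra.
From mathcomp Require Import all_classical all_reals all_analysis.
From mathcomp Require Import ring lra zify.
Set Implicit Arguments. Unset Strict Implicit. Unset Printing Implicit Defensive.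
Import Order.TTheory GRing.Theory Num.Theory.
Import numFieldNormedType.Exports.
Local Open Scope ring_scope.

(* Since [g] has unit speed, all derivatives of [<g', g'>] vanish; by the
   Leibniz rule, as long as [g'', ..., g^(k-1)] vanish at [t0], [g^(k)(t0)] is
   orthogonal to [g'(t0)].  The type [(1, 1+s, _)] makes [g^(k)(t0)] parallel to
   [g'(t0)] for [k <= s], hence [g'' = ... = g^(s) = 0] at [t0].  Consequently
   the osculating plane is spanned by [g'] and [g^(s+1)], and the Leibniz rule
   applied to [kappa2 = <g'', n>] leaves only [kappa2^(s-1) = <g^(s+1), n>].
   Both planes contain [g(t0) + R g'(t0)], so they agree iff [g^(s+1)] is
   orthogonal to [n]. *)

Section Dot.
Variable R : realType.
Implicit Types u v w : vec3 R.

Lemma dotE u v : dot u v = u 0 0 * v 0 0 + u 0 1 * v 0 1 + u 0 2 * v 0 2.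
Proof.
rewrite /dot mxE !big_ord_recr big_ord0 /= !mxE add0r.
by repeat f_equal; apply/val_inj.
Qed.

Lemma dotC u v : dot u v = dot v u.
Proof. by rewrite !dotE; ring. Qed.

Lemma dotDl u v w : dot (u + v) w = dot u w + dot v w.
Proof. by rewrite !dotE !mxE; ring. Qed.

Lemma dotZl (a : R) u w : dot (a *: u) w = a * dot u w.
Proof. by rewrite !dotE !mxE; ring. Qed.

Lemma dot0l w : dot 0 w = 0.
Proof. by rewrite !dotE !mxE; ring. Qed.

Lemma dot_self1_neq0 u : dot u u = 1 -> u != 0.
Proof. by apply: contra_eqN => /eqP ->; rewrite dot0l eq_sym oner_eq0. Qed.

Lemma sub_kermx_trP u v : reflect (dot u v = 0) (u <= kermx v^T)%MS.
Proof.
rewrite sub_kermx [u *m _]mx11_scalar -/(dot u v).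
apply: (iffP eqP) => [/matrixP/(_ 0 0) | ->]; rewrite ?mxE //.
by apply/matrixP => i j; rewrite !mxE mul0rn.
Qed.

Lemma rank_kermx_tr v : v != 0 -> \rank (kermx v^T) = 2%N.
Proof. by move=> v0; rewrite mxrank_ker mxrank_tr rank_rV v0. Qed.

Lemma orthogonal_in_span u v (n : vec3 R) w :
  n != 0 -> dot u n = 0 -> dot v n = 0 -> \rank (col_mx u v) = 2%N ->
  dot w n = 0 -> exists a b : R, w = a *: u + b *: v.
Proof.
move=> n0 /sub_kermx_trP un /sub_kermx_trP vn ruv /sub_kermx_trP wn.
have uv_n : (col_mx u v <= kermx n^T)%MS by rewrite col_mx_sub un vn.
have n_uv : (kermx n^T <= col_mx u v)%MS.
  by rewrite -(mxrank_leqif_sup uv_n).2 ruv rank_kermx_tr.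
have /submxP[D ->] := submx_trans wn n_uv.
exists (lsubmx D 0 0), (rsubmx D 0 0).
by rewrite -[D in LHS]hsubmxK mul_row_col -!mul_scalar_mx -!mx11_scalar.
Qed.

End Dot.

Arguments dern : simpl never.

Section Derivatives.
Variable R : realType.

Lemma dernS (V : normedModType R) k (f : R -> V) :
  dern k.+1 f = derive1 (dern k f).
Proof. exact: derive1nS. Qed.

Lemma dernD (V : normedModType R) i j (f : R -> V) :
  dern i (dern j f) = dern (i + j) f.
Proof. by rewrite /dern /derive1n iterD. Qed.

Lemma dern_cst (V : normedModType R) k (c : V) :
  dern k.+1 (fun _ : R => c) = fun _ => 0.
Proof.
elim: k => [|k IH]; rewrite dernS ?IH;
  by apply/funext => t; rewrite derive1_cst.
Qed.

Lemma smooth_dern (V : normedModType R) k (f : R -> V) :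
  smooth f -> smooth (dern k f).
Proof. by move=> sf j t; rewrite dernD; apply: sf. Qed.

Section DotProduct.
Variables (f h : R -> vec3 R) (t : R).
Hypotheses (df : derivable f t 1) (dh : derivable h t 1).

Let dot_coord : (fun x => dot (f x) (h x)) =
  (fun x => f x 0 0) * (fun x => h x 0 0) + (fun x => f x 0 1) * (fun x => h x 0 1)
  + (fun x => f x 0 2) * (fun x => h x 0 2).
Proof. by apply/funext => x; rewrite dotE. Qed.

Let df_coord j : derivable (fun x => f x 0 j) t 1.
Proof. exact: (derivable_mxP f t 1).1 df 0 j. Qed.

Let dh_coord j : derivable (fun x => h x 0 j) t 1.
Proof. exact: (derivable_mxP h t 1).1 dh 0 j. Qed.

Lemma derivable_dot : derivable (fun x => dot (f x) (h x)) t 1.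
Proof.
by rewrite dot_coord; apply: derivableD; [apply: derivableD|]; apply: derivableM.
Qed.

Lemma derive_dot :
  'D_1 (fun x => dot (f x) (h x)) t = dot ('D_1 f t) (h t) + dot (f t) ('D_1 h t).
Proof.
rewrite dot_coord deriveD; last 2 first.
- by apply: derivableD; apply: derivableM.
- exact: derivableM.
rewrite deriveD ?deriveM //; try exact: derivableM.
rewrite (derive_mx df) (derive_mx dh) !dotE !mxE /= -![_ *: _]/(_ * _).
ring.
Qed.

End DotProduct.

Lemma sum_binomial_succ (F : nat -> nat -> R) k :
  \sum_(i < k.+1) 'C(k, i)%:R * (F i.+1 (k - i)%N + F i (k - i).+1) =
  \sum_(i < k.+2) 'C(k.+1, i)%:R * F i (k.+1 - i)%N.
Proof.
rewrite [RHS]big_ord_recl /= bin0 subn0.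
under [X in _ = _ + X]eq_bigr => i _ do
  rewrite /bump /= add1n binS subSS natrD mulrDl.
rewrite big_split /=.
under eq_bigr => i _ do rewrite mulrDr.
rewrite big_split /= addrC [RHS]addrA; congr (_ + _).
rewrite big_ord_recl /= bin0 subn0; congr (_ + _).
rewrite [RHS]big_ord_recr /= bin_small // mul0r addr0.
by apply: eq_bigr => i _; rewrite /bump /= add1n subnSK.
Qed.

Lemma dern_dot (f h : R -> vec3 R) : smooth f -> smooth h -> forall k,
  dern k (fun x => dot (f x) (h x)) =
  fun t => \sum_(i < k.+1) 'C(k, i)%:R * dot (dern i f t) (dern (k - i) h t).
Proof.
move=> sf sh; elim=> [|k IH].
  by apply/funext => t; rewrite big_ord1 /= bin0 mul1r.
rewrite dernS IH; apply/funext => t; rewrite derive1E -fct_sumE.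
have D i : derivable (fun t => dot (dern i f t) (dern (k - i) h t)) t 1.
  exact: derivable_dot.
rewrite derive_sum => [|i]; last exact: derivableZ (D i).
rewrite -(sum_binomial_succ (fun a b => dot (dern a f t) (dern b h t))).
apply: eq_bigr => i _.
rewrite (deriveZ _ (D i)) derive_dot ?dernS ?derive1E //.
Qed.

End Derivatives.

Arguments smooth_dern {R V} k {f}.

Section BoundaryCurve.
Variables (R : realType) (g : R -> vec3 R) (t0 : R).
Hypotheses (smooth_g : smooth g)
  (unit_speed : forall t, dot (dern 1 g t) (dern 1 g t) = 1).

Lemma row_Amat m (i : 'I_m) : row i (Amat g t0 m) = dern i.+1 g t0.
Proof. by apply/rowP => j; rewrite !mxE. Qed.

Lemma rank_Amat_le1 a2 a3 m :
  is_min_rank_index g t0 2 a2 -> is_min_rank_index g t0 3 a3 ->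
  (a2 <= a3)%N -> (m < a2)%N -> (\rank (Amat g t0 m) <= 1)%N.
Proof.
move=> [_ min2] [_ min3] a23 ma2.
have ne2 : \rank (Amat g t0 m) <> 2%N by move=> /min2; lia.
have ne3 : \rank (Amat g t0 m) <> 3%N by move=> /min3; lia.
have := rank_leq_col (Amat g t0 m); lia.
Qed.

Lemma dern1_neq0 : dern 1 g t0 != 0.
Proof. exact: dot_self1_neq0. Qed.

Lemma dern_parallel_dern1 m : (\rank (Amat g t0 m) <= 1)%N ->
  forall k, (0 < k <= m)%N -> exists c : R, dern k g t0 = c *: dern 1 g t0.
Proof.
move=> rkA [//|k] /andP[_ km].
have m0 : (0 < m)%N by lia.
have u_A := row_sub (Ordinal m0) (Amat g t0 m); rewrite row_Amat in u_A.
have rk_u : \rank (dern 1 g t0) = 1%N by rewrite rank_rV dern1_neq0.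
have A_u : (Amat g t0 m <= dern 1 g t0)%MS.
  by rewrite -(mxrank_leqif_sup u_A).2 rk_u eqn_leq rkA andbT -{1}rk_u mxrankS.
apply/sub_rVP; have := submx_trans (row_sub (Ordinal km) _) A_u.
by rewrite row_Amat.
Qed.

Lemma dern1_orthogonal_dern k : (2 <= k)%N ->
  (forall j, (2 <= j < k)%N -> dern j g t0 = 0) ->
  dot (dern 1 g t0) (dern k g t0) = 0.
Proof.
case: k => [|[|p]] // _ vanish.
have := congr1 (fun f => f t0)
  (dern_dot (smooth_dern 1 smooth_g) (smooth_dern 1 smooth_g) p.+1).
rewrite (_ : (fun x => _) = fun _ => 1); last exact/funext.
rewrite dern_cst big_ord_recl big_ord_recr /= big1 => [|i _]; last first.
  by rewrite /bump /= !dernD vanish ?dot0l ?mulr0 //; have := ltn_ord i; lia.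
rewrite bin0 binn subn0 subnn !dernD !mul1r add0r add0n addn1 dotC.
lra.
Qed.

Lemma dern_vanish m : (\rank (Amat g t0 m) <= 1)%N ->
  forall k, (2 <= k <= m)%N -> dern k g t0 = 0.
Proof.
move=> rkA; elim/ltn_ind=> k IH /andP[k2 km].
have [c gk] : exists c : R, dern k g t0 = c *: dern 1 g t0.
  by apply: (dern_parallel_dern1 rkA); lia.
have : dot (dern 1 g t0) (dern k g t0) = 0.
  by apply: dern1_orthogonal_dern => // j /andP[j2 jk]; apply: IH; lia.
by rewrite gk dotC dotZl unit_speed mulr1 => c0; rewrite c0 scale0r.
Qed.

Lemma Amat_sub_col_mx s : (forall j, (2 <= j <= s)%N -> dern j g t0 = 0) ->
  (Amat g t0 s.+1 <= col_mx (dern 1 g t0) (dern s.+1 g t0))%MS.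
Proof.
move=> vanish; apply/row_subP => i; rewrite row_Amat -addsmxE.
have [-> | i_neq0] := eqVneq (i : nat) 0%N; first exact: addsmxSl.
have [-> | i_neqs] := eqVneq (i : nat) s; first exact: addsmxSr.
by rewrite vanish ?sub0mx //; have := ltn_ord i; lia.
Qed.

Lemma dern_kappa2 (n : R -> vec3 R) k : smooth n ->
  (forall j, (2 <= j <= k.+1)%N -> dern j g t0 = 0) ->
  dern k (kappa2 g n) t0 = dot (dern k.+2 g t0) (n t0).
Proof.
move=> smooth_n vanish.
have -> : kappa2 g n = fun t => dot (dern 2 g t) (n t).
  by apply/funext => t; rewrite /kappa2 /e1 /e3 dernD.
rewrite (dern_dot (smooth_dern 2 smooth_g) smooth_n k) big_ord_recr /=.
rewrite big1 => [|j _]; last first.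
  by rewrite dernD vanish ?dot0l ?mulr0 //; have := ltn_ord j; lia.
by rewrite add0r binn mul1r subnn dernD addn2.
Qed.

Lemma osculating_tangent_pointP (n : R -> vec3 R) a :
  n t0 != 0 -> dot (dern 1 g t0) (n t0) = 0 ->
  \rank (col_mx (dern 1 g t0) (dern a g t0)) = 2%N ->
  osculating_tangent_point g n t0 1 a <-> dot (dern a g t0) (n t0) = 0.
Proof.
move=> n0 un ruv; split.
- move=> plane_eq.
  have : tangent_plane g n t0 (g t0 + 0 *: dern 1 g t0 + 1 *: dern a g t0).
    by rewrite -plane_eq; exists 0, 1.
  by rewrite /tangent_plane /= scale0r addr0 scale1r (addrC (g t0)) addrK.
- move=> vn; apply/seteqP; split => p /=.
  + case=> x [y ->]; rewrite /tangent_plane /= -(addrA (g t0)) (addrC (g t0)) addrK.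
    by rewrite dotDl !dotZl un vn !mulr0 addr0.
  + move=> /(orthogonal_in_span n0 un vn ruv)[x [y xy]].
    by exists x, y; rewrite -addrA -xy addrC subrK.
Qed.

End BoundaryCurve.

Theorem theorem3p2 (R : realType) (g n : R -> vec3 R) (t0 : R) (r s : nat) :
  (0 < r)%N -> (0 < s)%N ->
  surface_boundary_data g n ->
  has_type_at g t0 1 (1 + s) (1 + s + r) ->
  (osculating_tangent_point g n t0 1 (1 + s) <->
   dern (s - 1) (kappa2 g n) t0 = 0).
Proof.
move=> _; case: s => // s _ [smooth_g [smooth_n [unit_g [unit_n n_g]]]].
move=> [_ [_ [type2 type3]]]; rewrite add1n subn1 /=.
have rkA : (\rank (Amat g t0 s.+1) <= 1)%N.
  by apply: (rank_Amat_le1 type2 type3); rewrite ?leq_addr.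
have vanish := dern_vanish smooth_g unit_g rkA.
have rk_plane : \rank (col_mx (dern 1 g t0) (dern s.+2 g t0)) = 2%N.
  apply/eqP; rewrite eqn_leq rank_leq_row -{1}type2.1.
  exact: mxrankS (Amat_sub_col_mx vanish).
rewrite (dern_kappa2 smooth_g smooth_n vanish).
apply: osculating_tangent_pointP rk_plane.
- exact: dot_self1_neq0.
- by rewrite dotC.
Qed.
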